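(* In any concurrent run of the Block-STM algorithm (described in the context) on a block of $n$ transactions, if a thread joins after invoking the $\mathtt{run}$ procedure, then all transactions $tx_0,\dots,tx_{n-1}$ are globally committed at that time.
   Context: Model: threads perform atomic operations that appear to take place in a single global order; a ''time'' is a point in this order. Locks protect per-transaction status and dependency sets. Problem. A block is a sequence of transactions $tx_0,\dots,tx_{n-1}$ ($n=\mathtt{BLOCK.size()}$), each a deterministic program reading and writing memory locations. Shared state. MVMemory: a map $\mathit{data}$ from $(\text{location},\text{txn index})$ to (incarnation number, value) or a marker ESTIMATE; arrays $\mathit{last\_written\_locations}[j]$, $\mathit{last\_read\_set}[j]$, accessed atomically. A version is $(j,i)$. Scheduler: atomic counters $\mathit{execution\_idx}=0$, $\mathit{validation\_idx}=0$, $\mathit{decrease\_cnt}=0$, $\mathit{num\_active\_tasks}=0$, flag $\mathit{done\_marker}=$false; lock-protected $\mathit{txn\_status}[j]=(\text{incarnation},\text{status})$, initially $(0,\mathtt{READY\_TO\_EXECUTE})$, status $\in\{\mathtt{READY\_TO\_EXECUTE},\mathtt{EXECUTING},\mathtt{EXECUTED},\mathtt{ABORTING}\}$; lock-protected dependency sets $\mathit{txn\_dependency}[j]$, initially empty. MVMemory operations. $\mathtt{read}(p,j)$: largest $k<j$ with an entry $(p,k)$; none: NOT_FOUND; ESTIMATE: READ_ERROR with blocking index $k$; else OK with version and value. $\mathtt{record}((j,i),R,W)$: write $\mathit{data}[(p,j)]:=(i,v)$ for $(p,v)\in W$, remove entries $(p,j)$ of previously written but not rewritten locations, update $\mathit{last\_written\_locations}[j]$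 and $\mathit{last\_read\_set}[j]:=R$, return whether a new location was written. $\mathtt{convert\_writes\_to\_estimates}(j)$ sets all entries $(p,j)$ with $p\in\mathit{last\_written\_locations}[j]$ to ESTIMATE. $\mathtt{validate\_read\_set}(j)$ returns true iff re-reading each recorded location with $\mathtt{read}(p,j)$ gives the same recorded version (NOT_FOUND for $\bot$) and no READ_ERROR. VM.execute($j$) runs $tx_j$ locally, reading own writes, else $\mathtt{read}(p,j)$ (NOT_FOUND: read initial storage, record $(p,\bot)$; OK: record version; READ_ERROR: stop, return blocking index); never writes shared memory. Scheduler. $\mathtt{decrease\_execution\_idx}(t)$/$\mathtt{decrease\_validation\_idx}(t)$: index $:=\min(\text{index},t)$, then increment $\mathit{decrease\_cnt}$. $\mathtt{try\_incarnate}(k)$: if $k<n$ and $tx_k$'s status is $\mathtt{READY\_TO\_EXECUTE}$ (incarnation $i$), set $\mathtt{EXECUTING}$, return $(k,i)$; else decrement $\mathit{num\_active\_tasks}$, return none. $\mathtt{next\_task}$: if $\mathit{validation\_idx}<\mathit{execution\_idx}$: if $\mathit{validation\_idx}\ge n$, call check_done, return none; else increment $\mathit{num\_active\_tasks}$, fetch-and-increment $\mathit{validation\_idx}$ obtaining $k$; if $k<n$ and $tx_k$'s status is $\mathtt{EXECUTED}$ (incarnation $i$) return validation task $(k,i)$, else decrement $\mathit{num\_active\_tasks}$. Otherwise: if $\mathit{execution\_idx}\ge n$ call check_done, return none; else increment $\mathit{num\_active\_tasks}$, fetch-and-increment $\mathit{execution\_idx}$ obtaining $k$, return $\mathtt{try\_incarnate}(k)$.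 $\mathtt{check\_done}$: read $c:=\mathit{decrease\_cnt}$, then if $\min(\mathit{execution\_idx},\mathit{validation\_idx})\ge n$, then $\mathit{num\_active\_tasks}=0$, then $\mathit{decrease\_cnt}=c$, set $\mathit{done\_marker}:=$true. Execution task $(k,i)$: run VM.execute($k$). On READ_ERROR with blocking $b$: under lock of $\mathit{txn\_dependency}[b]$, if $tx_b$'s status is $\mathtt{EXECUTED}$ retry execution; else set $tx_k$'s status $\mathtt{ABORTING}$, add $k$ to $\mathit{txn\_dependency}[b]$, release, decrement $\mathit{num\_active\_tasks}$. Otherwise $w:=\mathtt{record}(\dots)$; set status $\mathtt{EXECUTED}$; swap out $\mathit{txn\_dependency}[k]$, set each dependent $d$ to $(\text{incarnation}+1,\mathtt{READY\_TO\_EXECUTE})$ and if any, $\mathtt{decrease\_execution\_idx}$(min dependent); if $\mathit{validation\_idx}>k$: if $w$, $\mathtt{decrease\_validation\_idx}(k)$, else return validation task $(k,i)$ keeping $\mathit{num\_active\_tasks}$; if no task returned, decrement $\mathit{num\_active\_tasks}$. Validation task $(k,i)$: if $\mathtt{validate\_read\_set}(k)$ fails and under lock $\mathit{txn\_status}[k]=(i,\mathtt{EXECUTED})$, set $\mathtt{ABORTING}$ (aborted). If aborted: convert writes of $k$ to ESTIMATE; $\mathit{txn\_status}[k]:=(i+1,\mathtt{READY\_TO\_EXECUTE})$; $\mathtt{decrease\_validation\_idx}(k+1)$; if $\mathit{execution\_idx}>k$ and $\mathtt{try\_incarnate}(k)$ returns a version, return that execution task keeping $\mathit{num\_active\_tasks}$.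 Otherwise decrement $\mathit{num\_active\_tasks}$. $\mathtt{run}$: while $\mathit{done\_marker}$ is false, perform the task in hand or obtain one via next_task. A thread joins when it returns from $\mathtt{run}$. Intervals. Pre-validation of $tx_j$: from a fetch-and-increment of $\mathit{validation\_idx}$ returning $j$ until just before the corresponding decrement in next_task or just before the validation task is returned. Execution of $(j,i)$: from setting $tx_j$'s status to $\mathtt{EXECUTING}$ (incarnation $i$) until its abort via the dependency mechanism, or just before its final decrement of $\mathit{num\_active\_tasks}$, or just before it returns a validation task. Validation of $(j,i)$: from handing the task to a thread until just before its final decrement or just before it returns an execution task. Global commit index at time $T$: minimum of $\mathit{validation\_idx}$, all $j$ with status not $\mathtt{EXECUTED}$, indices with ongoing pre-validation, and indices of versions with ongoing execution or validation. $tx_0,\dots,tx_k$ are globally committed at $T$ if this index exceeds $k$. *)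

(* An operational model of Block-STM: shared state + per-thread program
   counters; every constructor of [tstep] is one atomic operation in the
   single global order of the model. *)
From HB Require Import structures.
From mathcomp Require Import all_boot all_order all_algebra.

Set Implicit Arguments.
Unset Strict Implicit.
Unset Printing Implicit Defensive.

(* Transactions: deterministic programs.  A program is a function from the  *)
(* history of responses received so far (Some v for a read returning v,     *)
(* None for a write) to its next action.                                    *)
Inductive Action (Loc Val : Type) :=
| ARead of Loc
| AWrite of Loc & Val
| AFinish.
Arguments AFinish {Loc Val}.

Definition Prog (Loc Val : Type) := seq (option Val) -> Action Loc Val.

Inductive TStatus := READY_TO_EXECUTE | EXECUTING | EXECUTED | ABORTING.

Definition is_executed (st : TStatus) : bool :=
  if st is EXECUTED then true else false.
Definition is_ready (st : TStatus) : bool :=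
  if st is READY_TO_EXECUTE then true else false.

(* An MVMemory entry: (incarnation number, value) or the marker ESTIMATE. *)
Inductive Entry (Val : Type) := EVal of nat & Val | EEst.
Arguments EEst {Val}.

(* versions are pairs (txn index, incarnation) *)
Definition Version := (nat * nat)%type.

Inductive ReadRes (Val : Type) :=
| RNotFound
| ROk of nat & nat & Val       (* OK, version (j, incarnation), value *)
| RErr of nat.                 (* READ_ERROR, blocking index *)
Arguments RNotFound {Val}.

Definition upd (A : eqType) (B : Type) (f : A -> B) (a : A) (b : B) : A -> B :=
  fun x => if x == a then b else f x.
Definition upd2 (A B : eqType) (C : Type) (f : A -> B -> C) (a : A) (b : B) (c : C)
  : A -> B -> C :=
  fun x y => if (x == a) && (y == b) then c else f x y.

Fixpoint find_below (Loc : Type) (Val : Type)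
  (data : Loc -> nat -> option (Entry Val)) (p : Loc) (j : nat)
  : option (nat * Entry Val) :=
  match j with
  | 0 => None
  | j'.+1 => match data p j' with
             | Some e => Some (j', e)
             | None => find_below data p j'
             end
  end.

Definition mvread (Loc : Type) (Val : Type)
  (data : Loc -> nat -> option (Entry Val)) (p : Loc) (j : nat) : ReadRes Val :=
  match find_below data p j with
  | None => RNotFound
  | Some (k, EVal inc v) => ROk k inc v
  | Some (k, EEst) => RErr Val k
  end.

(* does the current read result agree with the recorded version
   (None = ⊥, i.e. read from initial storage)? *)
Definition read_matches (Val : Type) (r : ReadRes Val) (ver : option Version) : bool :=
  match r, ver with
  | RNotFound, None => true
  | ROk j inc _, Some (j', inc') => (j == j') && (inc == inc')
  | _, _ => false
  end.

(* Local state of VM.execute: response history, local write buffer (newest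
   first) and read set. *)
Record VM (Loc Val : Type) := mkVM {
  hist : seq (option Val);
  wbuf : seq (Loc * Val);
  rset : seq (Loc * option Version) }.
Definition vm0 (Loc Val : Type) : VM Loc Val := mkVM [::] [::] [::].
Arguments vm0 {Loc Val}.

Fixpoint lookup (Loc : eqType) (Val : Type) (w : seq (Loc * Val)) (p : Loc)
  : option Val :=
  match w with
  | [::] => None
  | (q, v) :: w' => if q == p then Some v else lookup w' p
  end.

Definition wlocs (Loc : eqType) (Val : Type) (w : seq (Loc * Val)) : seq Loc :=
  undup (map fst w).

Record Shared (Loc Val : Type) := mkShared {
  data : Loc -> nat -> option (Entry Val);
  last_written_locations : nat -> seq Loc;
  last_read_set : nat -> seq (Loc * option Version);
  execution_idx : nat;
  validation_idx : nat;
  decrease_cnt : nat;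
  num_active_tasks : int;
  done_marker : bool;
  txn_status : nat -> nat * TStatus;
  txn_dependency : nat -> seq nat;
  dep_lock : nat -> bool   (* lock of txn_dependency[j] is held *)
}.

Section Setters.
Context (Loc Val : Type) (s : Shared Loc Val).
Definition set_data d : Shared Loc Val := mkShared d (last_written_locations s) (last_read_set s)
  (execution_idx s) (validation_idx s) (decrease_cnt s) (num_active_tasks s)
  (done_marker s) (txn_status s) (txn_dependency s) (dep_lock s).
Definition set_lw d : Shared Loc Val := mkShared (data s) d (last_read_set s)
  (execution_idx s) (validation_idx s) (decrease_cnt s) (num_active_tasks s)
  (done_marker s) (txn_status s) (txn_dependency s) (dep_lock s).
Definition set_lr d : Shared Loc Val := mkShared (data s) (last_written_locations s) d
  (execution_idx s) (validation_idx s) (decrease_cnt s) (num_active_tasks s)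
  (done_marker s) (txn_status s) (txn_dependency s) (dep_lock s).
Definition set_exec d : Shared Loc Val := mkShared (data s) (last_written_locations s) (last_read_set s)
  d (validation_idx s) (decrease_cnt s) (num_active_tasks s)
  (done_marker s) (txn_status s) (txn_dependency s) (dep_lock s).
Definition set_val d : Shared Loc Val := mkShared (data s) (last_written_locations s) (last_read_set s)
  (execution_idx s) d (decrease_cnt s) (num_active_tasks s)
  (done_marker s) (txn_status s) (txn_dependency s) (dep_lock s).
Definition set_dec d : Shared Loc Val := mkShared (data s) (last_written_locations s) (last_read_set s)
  (execution_idx s) (validation_idx s) d (num_active_tasks s)
  (done_marker s) (txn_status s) (txn_dependency s) (dep_lock s).
Definition set_active d : Shared Loc Val := mkShared (data s) (last_written_locations s) (last_read_set s)
  (execution_idx s) (validation_idx s) (decrease_cnt s) d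
  (done_marker s) (txn_status s) (txn_dependency s) (dep_lock s).
Definition set_done d : Shared Loc Val := mkShared (data s) (last_written_locations s) (last_read_set s)
  (execution_idx s) (validation_idx s) (decrease_cnt s) (num_active_tasks s)
  d (txn_status s) (txn_dependency s) (dep_lock s).
Definition set_status d : Shared Loc Val := mkShared (data s) (last_written_locations s) (last_read_set s)
  (execution_idx s) (validation_idx s) (decrease_cnt s) (num_active_tasks s)
  (done_marker s) d (txn_dependency s) (dep_lock s).
Definition set_deps d : Shared Loc Val := mkShared (data s) (last_written_locations s) (last_read_set s)
  (execution_idx s) (validation_idx s) (decrease_cnt s) (num_active_tasks s)
  (done_marker s) (txn_status s) d (dep_lock s).
Definition set_dlock d : Shared Loc Val := mkShared (data s) (last_written_locations s) (last_read_set s)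
  (execution_idx s) (validation_idx s) (decrease_cnt s) (num_active_tasks s)
  (done_marker s) (txn_status s) (txn_dependency s) d.
End Setters.

Definition init_shared (Loc Val : Type) : Shared Loc Val :=
  mkShared (fun _ _ => None) (fun _ => [::]) (fun _ => [::]) 0 0 0 0%R false
    (fun _ => (0, READY_TO_EXECUTE)) (fun _ => [::]) (fun _ => false).

(* Thread program counters.  Each constructor is a control point of the     *)
(* pseudocode; the step out of it performs exactly one atomic operation.    *)
(* k = transaction index, i = incarnation.                                  *)
Inductive Task := TExec of nat & nat | TVal of nat & nat.

Inductive Pc (Loc Val : Type) :=
(* run loop: about to read done_marker, holding an optional task *)
| PLoop of option Task
| PJoined                                  (* returned from run *)
(* next_task *)
| NT0                  (* read validation_idx *)
| NT1 of nat           (* read execution_idx and compare *)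
| NTV0                 (* read validation_idx, compare with n *)
| NTV1                 (* increment num_active_tasks *)
| NTV2                 (* fetch-and-increment validation_idx *)
| NTV3 of nat          (* got k: read status of k *)
| NTV4 of nat          (* decrement num_active_tasks *)
| NTE0                 (* read execution_idx, compare with n *)
| NTE1                 (* increment num_active_tasks *)
| NTE2                 (* fetch-and-increment execution_idx *)
(* check_done *)
| CD0                  (* read decrease_cnt *)
| CD1 of nat           (* read execution_idx *)
| CD2 of nat           (* read validation_idx *)
| CD3 of nat           (* read num_active_tasks *)
| CD4 of nat           (* re-read decrease_cnt *)
| CD5                  (* set done_marker *)
(* try_incarnate k; Some i = called from the validation task (k, i) *)
| TI0 of nat & option nat   (* status check/set under lock *)
| TI1 of nat & option nat   (* decrement num_active_tasks *)
(* execution task (k, i) *)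
| EXr of nat & nat & VM Loc Val          (* running VM.execute *)
| EDL0 of nat & nat & nat                (* acquire lock of txn_dependency[b] *)
| EDL1 of nat & nat & nat                (* read status of b *)
| EDLretry of nat & nat & nat            (* release lock, retry execution *)
| EDL2 of nat & nat & nat                (* set status of k ABORTING *)
| EDL3 of nat & nat & nat                (* add k to txn_dependency[b] *)
| EDL4 of nat & nat & nat                (* release lock *)
| EDL5                                   (* decrement num_active_tasks *)
| ERW of nat & nat & VM Loc Val & seq Loc          (* record: apply writes *)
| ERP of nat & nat & VM Loc Val                    (* read last_written_locations *)
| ERM of nat & nat & VM Loc Val & bool & seq Loc   (* remove stale entries *)
| ERL of nat & nat & VM Loc Val & bool             (* update last_written_locations *)
| ERR of nat & nat & VM Loc Val & bool             (* update last_read_set *)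
| ESE of nat & nat & bool                (* set status EXECUTED *)
| ESW of nat & nat & bool                (* swap out txn_dependency[k] (under its lock) *)
| ERD of nat & nat & bool & seq nat & seq nat   (* resume dependents: all, remaining *)
| EDE of nat & nat & bool & nat          (* decrease_execution_idx: min *)
| EDC of nat & nat & bool                (* decrease_execution_idx: decrease_cnt++ *)
| EVI of nat & nat & bool                (* read validation_idx *)
| EDV of nat & nat                       (* decrease_validation_idx(k): min *)
| EDVC of nat & nat                      (* decrease_cnt++ *)
| EDEC of nat & nat                      (* final decrement of num_active_tasks *)
(* validation task (k, i) *)
| VR0 of nat & nat                       (* read last_read_set[k] *)
| VR1 of nat & nat & seq (Loc * option Version)   (* re-read each location *)
| VAB of nat & nat                       (* try abort under status lock *)
| VCW0 of nat & nat                      (* read last_written_locations[k] *)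
| VCW1 of nat & nat & seq Loc            (* set entries to ESTIMATE *)
| VSR of nat & nat                       (* status := (i+1, READY_TO_EXECUTE) *)
| VDV of nat & nat                       (* decrease_validation_idx(k+1): min *)
| VDVC of nat & nat                      (* decrease_cnt++ *)
| VEI of nat & nat                       (* read execution_idx *)
| VDEC of nat & nat.                     (* final decrement of num_active_tasks *)

Arguments PJoined {Loc Val}. Arguments NT0 {Loc Val}. Arguments NTV0 {Loc Val}.
Arguments NTV1 {Loc Val}. Arguments NTV2 {Loc Val}. Arguments NTE0 {Loc Val}.
Arguments NTE1 {Loc Val}. Arguments NTE2 {Loc Val}. Arguments CD0 {Loc Val}.
Arguments CD5 {Loc Val}. Arguments EDL5 {Loc Val}.
Arguments PLoop {Loc Val}. Arguments NT1 {Loc Val}. Arguments NTV3 {Loc Val}.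
Arguments NTV4 {Loc Val}. Arguments CD1 {Loc Val}. Arguments CD2 {Loc Val}.
Arguments CD3 {Loc Val}. Arguments CD4 {Loc Val}. Arguments TI0 {Loc Val}.
Arguments TI1 {Loc Val}. Arguments EDL0 {Loc Val}. Arguments EDL1 {Loc Val}.
Arguments EDLretry {Loc Val}. Arguments EDL2 {Loc Val}. Arguments EDL3 {Loc Val}.
Arguments EDL4 {Loc Val}. Arguments ESE {Loc Val}. Arguments ESW {Loc Val}.
Arguments ERD {Loc Val}. Arguments EDE {Loc Val}. Arguments EDC {Loc Val}.
Arguments EVI {Loc Val}. Arguments EDV {Loc Val}. Arguments EDVC {Loc Val}.
Arguments EDEC {Loc Val}. Arguments VR0 {Loc Val}. Arguments VAB {Loc Val}.
Arguments VCW0 {Loc Val}. Arguments VSR {Loc Val}.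
Arguments VDV {Loc Val}. Arguments VDVC {Loc Val}. Arguments VEI {Loc Val}.
Arguments VDEC {Loc Val}.
Arguments EXr {Loc Val}. Arguments ERW {Loc Val}. Arguments ERP {Loc Val}.
Arguments ERM {Loc Val}. Arguments ERL {Loc Val}. Arguments ERR {Loc Val}.
Arguments VR1 {Loc Val}. Arguments VCW1 {Loc Val}.

Local Open Scope ring_scope.

(* One atomic step of a thread at control point [pc] in shared state [sh],
   leading to shared state [sh'] and control point [pc'].
   n = BLOCK.size(), txs j = tx_j, init = initial storage. *)
Definition tstep (Loc : eqType) (Val : Type) (n : nat) (txs : nat -> Prog Loc Val)
  (init : Loc -> Val) (sh : Shared Loc Val) (pc : Pc Loc Val)
  (sh' : Shared Loc Val) (pc' : Pc Loc Val) : Prop :=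
  let dec_active := set_active sh (num_active_tasks sh - 1) in
  let inc_active := set_active sh (num_active_tasks sh + 1) in
  let stat := txn_status sh in
  match pc with
  | PLoop task =>
      sh' = sh /\
      pc' = (if done_marker sh then PJoined else
             match task with
             | None => NT0
             | Some (TExec k i) => EXr k i vm0
             | Some (TVal k i) => VR0 k i
             end)
  | PJoined => False
  | NT0 => sh' = sh /\ pc' = NT1 (validation_idx sh)
  | NT1 v => sh' = sh /\ pc' = (if (v < execution_idx sh)%N then NTV0 else NTE0)
  | NTV0 => sh' = sh /\ pc' = (if (n <= validation_idx sh)%N then CD0 else NTV1)
  | NTV1 => sh' = inc_active /\ pc' = NTV2
  | NTV2 => sh' = set_val sh (validation_idx sh).+1 /\ pc' = NTV3 (validation_idx sh)
  | NTV3 k => sh' = sh /\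
      pc' = (if (k < n)%N && is_executed (stat k).2
             then PLoop (Some (TVal k (stat k).1)) else NTV4 k)
  | NTV4 k => sh' = dec_active /\ pc' = PLoop None
  | NTE0 => sh' = sh /\ pc' = (if (n <= execution_idx sh)%N then CD0 else NTE1)
  | NTE1 => sh' = inc_active /\ pc' = NTE2
  | NTE2 => sh' = set_exec sh (execution_idx sh).+1 /\ pc' = TI0 (execution_idx sh) None
  | CD0 => sh' = sh /\ pc' = CD1 (decrease_cnt sh)
  | CD1 c => sh' = sh /\ pc' = (if (n <= execution_idx sh)%N then CD2 c else PLoop None)
  | CD2 c => sh' = sh /\ pc' = (if (n <= validation_idx sh)%N then CD3 c else PLoop None)
  | CD3 c => sh' = sh /\ pc' = (if num_active_tasks sh == 0 then CD4 c else PLoop None)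
  | CD4 c => sh' = sh /\ pc' = (if decrease_cnt sh == c then CD5 else PLoop None)
  | CD5 => sh' = set_done sh true /\ pc' = PLoop None
  | TI0 k ov =>
      if (k < n)%N && is_ready (stat k).2 then
        sh' = set_status sh (upd stat k ((stat k).1, EXECUTING)) /\
        pc' = PLoop (Some (TExec k (stat k).1))
      else sh' = sh /\ pc' = TI1 k ov
  | TI1 k ov => sh' = dec_active /\ pc' = PLoop None
  | EXr k i vm =>
      sh' = sh /\
      match txs k (hist vm) with
      | ARead p =>
          match lookup (wbuf vm) p with
          | Some v => pc' = EXr k i (mkVM (rcons (hist vm) (Some v)) (wbuf vm) (rset vm))
          | None =>
              match mvread (data sh) p k with
              | RNotFound => pc' = EXr k i (mkVM (rcons (hist vm) (Some (init p)))
                                              (wbuf vm) (rcons (rset vm) (p, None)))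
              | ROk j inc v => pc' = EXr k i (mkVM (rcons (hist vm) (Some v))
                                              (wbuf vm) (rcons (rset vm) (p, Some (j, inc))))
              | RErr b => pc' = EDL0 k i b
              end
          end
      | AWrite p v => pc' = EXr k i (mkVM (rcons (hist vm) None) ((p, v) :: wbuf vm) (rset vm))
      | AFinish => pc' = ERW k i vm (wlocs (wbuf vm))
      end
  | EDL0 k i b => dep_lock sh b = false /\
      sh' = set_dlock sh (upd (dep_lock sh) b true) /\ pc' = EDL1 k i b
  | EDL1 k i b => sh' = sh /\
      pc' = (if is_executed (stat b).2 then EDLretry k i b else EDL2 k i b)
  | EDLretry k i b => sh' = set_dlock sh (upd (dep_lock sh) b false) /\ pc' = EXr k i vm0
  | EDL2 k i b => sh' = set_status sh (upd stat k ((stat k).1, ABORTING)) /\ pc' = EDL3 k i b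
  | EDL3 k i b =>
      sh' = set_deps sh (upd (txn_dependency sh) b
              (if k \in txn_dependency sh b then txn_dependency sh b
               else rcons (txn_dependency sh b) k)) /\ pc' = EDL4 k i b
  | EDL4 k i b => sh' = set_dlock sh (upd (dep_lock sh) b false) /\ pc' = EDL5
  | EDL5 => sh' = dec_active /\ pc' = PLoop None
  | ERW k i vm todo =>
      if todo is [::] then sh' = sh /\ pc' = ERP k i vm
      else exists p v, p \in todo /\ lookup (wbuf vm) p = Some v /\
             sh' = set_data sh (upd2 (data sh) p k (Some (EVal i v))) /\
             pc' = ERW k i vm (filter (predC1 p) todo)
  | ERP k i vm =>
      let prev := last_written_locations sh k in
      let new := wlocs (wbuf vm) in
      sh' = sh /\
      pc' = ERM k i vm (has (fun p => p \notin prev) new) [seq p <- prev | p \notin new]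
  | ERM k i vm w todo =>
      if todo is [::] then sh' = sh /\ pc' = ERL k i vm w
      else exists p, p \in todo /\
             sh' = set_data sh (upd2 (data sh) p k None) /\
             pc' = ERM k i vm w (filter (predC1 p) todo)
  | ERL k i vm w =>
      sh' = set_lw sh (upd (last_written_locations sh) k (wlocs (wbuf vm))) /\
      pc' = ERR k i vm w
  | ERR k i vm w =>
      sh' = set_lr sh (upd (last_read_set sh) k (rset vm)) /\ pc' = ESE k i w
  | ESE k i w => sh' = set_status sh (upd stat k ((stat k).1, EXECUTED)) /\ pc' = ESW k i w
  | ESW k i w => dep_lock sh k = false /\
      sh' = set_deps sh (upd (txn_dependency sh) k [::]) /\
      pc' = ERD k i w (txn_dependency sh k) (txn_dependency sh k)
  | ERD k i w D todo =>
      if todo is [::] then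
        sh' = sh /\ pc' = (if D is d0 :: _ then EDE k i w (foldr minn d0 D) else EVI k i w)
      else exists d, d \in todo /\
             sh' = set_status sh (upd stat d ((stat d).1.+1, READY_TO_EXECUTE)) /\
             pc' = ERD k i w D (filter (predC1 d) todo)
  | EDE k i w d => sh' = set_exec sh (minn (execution_idx sh) d) /\ pc' = EDC k i w
  | EDC k i w => sh' = set_dec sh (decrease_cnt sh).+1 /\ pc' = EVI k i w
  | EVI k i w => sh' = sh /\
      pc' = (if (k < validation_idx sh)%N then
               (if w then EDV k i else PLoop (Some (TVal k i)))
             else EDEC k i)
  | EDV k i => sh' = set_val sh (minn (validation_idx sh) k) /\ pc' = EDVC k i
  | EDVC k i => sh' = set_dec sh (decrease_cnt sh).+1 /\ pc' = EDEC k i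
  | EDEC k i => sh' = dec_active /\ pc' = PLoop None
  | VR0 k i => sh' = sh /\ pc' = VR1 k i (last_read_set sh k)
  | VR1 k i R =>
      sh' = sh /\
      pc' = match R with
            | [::] => VDEC k i
            | (p, ver) :: R' =>
                if read_matches (mvread (data sh) p k) ver then VR1 k i R' else VAB k i
            end
  | VAB k i =>
      if ((stat k).1 == i) && is_executed (stat k).2 then
        sh' = set_status sh (upd stat k (i, ABORTING)) /\ pc' = VCW0 k i
      else sh' = sh /\ pc' = VDEC k i
  | VCW0 k i => sh' = sh /\ pc' = VCW1 k i (last_written_locations sh k)
  | VCW1 k i todo =>
      if todo is [::] then sh' = sh /\ pc' = VSR k i
      else exists p, p \in todo /\
             sh' = set_data sh (upd2 (data sh) p k (Some EEst)) /\
             pc' = VCW1 k i (filter (predC1 p) todo)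
  | VSR k i => sh' = set_status sh (upd stat k (i.+1, READY_TO_EXECUTE)) /\ pc' = VDV k i
  | VDV k i => sh' = set_val sh (minn (validation_idx sh) k.+1) /\ pc' = VDVC k i
  | VDVC k i => sh' = set_dec sh (decrease_cnt sh).+1 /\ pc' = VEI k i
  | VEI k i => sh' = sh /\
      pc' = (if (k < execution_idx sh)%N then TI0 k (Some i) else VDEC k i)
  | VDEC k i => sh' = dec_active /\ pc' = PLoop None
  end.

Record GState (Loc Val : Type) := mkG {
  gsh : Shared Loc Val;
  gpc : nat -> Pc Loc Val }.

Definition init_state (Loc Val : Type) : GState Loc Val :=
  mkG (init_shared Loc Val) (fun _ => PLoop None).

Inductive reachable (Loc : eqType) (Val : Type) (n : nat)
  (txs : nat -> Prog Loc Val) (init : Loc -> Val) (m : nat) : GState Loc Val -> Prop :=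
| reach_init : reachable n txs init m (init_state Loc Val)
| reach_step s t sh' pc' :
    reachable n txs init m s -> (t < m)%N ->
    tstep n txs init (gsh s) (gpc s t) sh' pc' ->
    reachable n txs init m (mkG sh' (upd (gpc s) t pc')).

Definition prevalidating (Loc Val : Type) (pc : Pc Loc Val) : option nat :=
  match pc with
  | NTV3 k | NTV4 k => Some k
  | _ => None
  end.

Definition executing (Loc Val : Type) (pc : Pc Loc Val) : option Version :=
  match pc with
  | PLoop (Some (TExec k i)) => Some (k, i)
  | EXr k i _ | EDL0 k i _ | EDL1 k i _ | EDLretry k i _ | EDL2 k i _ => Some (k, i)
  | ERW k i _ _ | ERP k i _ | ERM k i _ _ _ | ERL k i _ _ | ERR k i _ _ => Some (k, i)
  | ESE k i _ | ESW k i _ | ERD k i _ _ _ | EDE k i _ _ | EDC k i _ | EVI k i _ => Some (k, i)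
  | EDV k i | EDVC k i | EDEC k i => Some (k, i)
  | _ => None
  end.

Definition validating (Loc Val : Type) (pc : Pc Loc Val) : option Version :=
  match pc with
  | PLoop (Some (TVal k i)) => Some (k, i)
  | VR0 k i | VR1 k i _ | VAB k i | VCW0 k i | VCW1 k i _ | VSR k i => Some (k, i)
  | VDV k i | VDVC k i | VEI k i | VDEC k i => Some (k, i)
  | TI0 k (Some i) | TI1 k (Some i) => Some (k, i)
  | _ => None
  end.

(* x belongs to the set whose minimum is the global commit index *)
Definition in_commit_set (Loc Val : Type) (n m : nat) (s : GState Loc Val) (x : nat)
  : Prop :=
  x = validation_idx (gsh s)
  \/ ((x < n)%N /\ ~~ is_executed (txn_status (gsh s) x).2)
  \/ (exists t, (t < m)%N /\
        (prevalidating (gpc s t) = Some x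
         \/ (exists i, executing (gpc s t) = Some (x, i))
         \/ (exists i, validating (gpc s t) = Some (x, i)))).

(* tx_0..tx_k globally committed: the global commit index (the minimum of
   the set above) exceeds k *)
Definition globally_committed (Loc Val : Type) (n m : nat) (s : GState Loc Val)
  (k : nat) : Prop :=
  forall x, in_commit_set n m s x -> (k < x)%N.

(* check_done sets done_marker only after reading, in this order, decrease_cnt
   = c, execution_idx >= n, validation_idx >= n, num_active_tasks = 0 and
   again decrease_cnt = c.  An index only drops below n together with a later
   increment of decrease_cnt, and a thread between the two still holds a task;
   hence, when num_active_tasks = 0 was read, both indices were >= n and no
   thread held a task.  In such an idle state every transaction is EXECUTED, by
   strong induction on j: a status READY_TO_EXECUTE, EXECUTING or ABORTING of
   tx_j is always justified by execution_idx <= j, by a thread holding a task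
   on j, or by j waiting in the dependency set of some b < j that is not yet
   executed.  This settled situation is stable under every further step, so it
   still holds when a thread reads done_marker and joins. *)

From mathcomp Require Import all_boot all_order all_algebra.
From mathcomp Require Import zify.

Set Implicit Arguments.
Unset Strict Implicit.
Unset Printing Implicit Defensive.

Lemma upd_same (A : eqType) (B : Type) (f : A -> B) a b : upd f a b a = b.
Proof. by rewrite /upd eqxx. Qed.

Lemma upd_other (A : eqType) (B : Type) (f : A -> B) a b x : x <> a -> upd f a b x = f x.
Proof. by rewrite /upd => /eqP/negbTE ->. Qed.

Lemma foldr_minn_le d x l j : j \in x :: l -> minn x (foldr minn d l) <= j.
Proof.
elim: l x => [|y l IH] x; rewrite !inE; first by move/eqP => ->; rewrite geq_minl.
case/orP => [/eqP ->|H]; first by rewrite geq_minl.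
by have := IH y H; rewrite /=; lia.
Qed.

Section BlockSTM.
Variables (Loc : eqType) (Val : Type) (n : nat) (txs : nat -> Prog Loc Val)
  (init : Loc -> Val) (m : nat).

Notation PC := (Pc Loc Val).
Notation SH := (Shared Loc Val).
Notation step := (tstep n txs init).

(* The control points between an increment of num_active_tasks and the
   matching decrement. *)
Definition holds_task (pc : PC) : bool :=
  match pc with
  | PLoop None | PJoined | NT0 | NT1 _ | NTV0 | NTV1 | NTE0 | NTE1
  | CD0 | CD1 _ | CD2 _ | CD3 _ | CD4 _ | CD5 => false
  | _ => true
  end.

Definition num_holding (f : nat -> PC) : nat := \sum_(u < m) holds_task (f u).

Lemma num_holding_upd f t x : t < m ->
  num_holding (upd f t x) + holds_task (f t) = num_holding f + holds_task x.
Proof.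
move=> tm; rewrite /num_holding (bigD1 (Ordinal tm)) //= [in RHS](bigD1 (Ordinal tm)) //=.
rewrite upd_same.
have -> : \sum_(u < m | u != Ordinal tm) holds_task (upd f t x u)
        = \sum_(u < m | u != Ordinal tm) holds_task (f u).
  by apply: eq_bigr => u; rewrite -val_eqE /= => /eqP ut; rewrite upd_other.
by rewrite addnAC [RHS]addnAC [holds_task x + _]addnC.
Qed.

Lemma num_holding0 f u : num_holding f = 0 -> u < m -> holds_task (f u) = false.
Proof.
move=> f0 um; apply/negP => hu.
suff : 0 < num_holding f by rewrite f0.
by rewrite /num_holding (bigD1 (Ordinal um)) //= hu.
Qed.

Definition some_thread (f : nat -> PC) (P : pred PC) : Prop :=
  exists u, u < m /\ P (f u).

Lemma some_thread_keep f t x P :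
  some_thread f P -> ~~ P (f t) -> some_thread (upd f t x) P.
Proof.
case=> u [um Pu] nPt; exists u; split => //.
by rewrite upd_other // => ut; rewrite -ut Pu in nPt.
Qed.

Lemma some_thread_new f t x (P : pred PC) : t < m -> P x -> some_thread (upd f t x) P.
Proof. by move=> tm Px; exists t; rewrite upd_same. Qed.

Lemma idle_no_thread f (P : pred PC) :
  num_holding f = 0 -> some_thread f P -> (forall pc, P pc -> holds_task pc) -> False.
Proof. by move=> f0 [u [um Pu]] /(_ _ Pu); rewrite num_holding0. Qed.

Record settled (sh : SH) (f : nat -> PC) : Prop := Settled {
  settled_exec_idx : n <= execution_idx sh;
  settled_val_idx : n <= validation_idx sh;
  settled_executed : forall j, j < n -> is_executed (txn_status sh j).2;
  settled_threads : forall u, u < m ->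
    [/\ executing (f u) = None, validating (f u) = None &
        forall x, prevalidating (f u) = Some x -> n <= x] }.

Lemma idle_outside_intervals pc : holds_task pc = false ->
  [/\ executing pc = None, validating pc = None &
      forall x, prevalidating pc = Some x -> n <= x].
Proof. by case: pc => //= -[[]|]. Qed.

Definition executes_pending (j : nat) (pc : PC) : bool :=
  match pc with
  | PLoop (Some (TExec k _)) | EXr k _ _ | EDL0 k _ _ | EDL1 k _ _ | EDLretry k _ _
  | EDL2 k _ _ | ERW k _ _ _ | ERP k _ _ | ERM k _ _ _ _ | ERL k _ _ _ | ERR k _ _ _
  | ESE k _ _ => k == j
  | _ => false
  end.

(* A thread that will still try to incarnate j, or lower execution_idx to at
   most j. *)
Definition incarnates_pending (j : nat) (pc : PC) : bool :=
  match pc with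
  | TI0 k _ | VDV k _ | VDVC k _ | VEI k _ => k == j
  | ERD _ _ _ D _ => j \in D
  | EDE _ _ _ d => d <= j
  | _ => false
  end.

(* A thread that will still reset j to READY_TO_EXECUTE, or is about to add j
   to a dependency set. *)
Definition resets_pending (j : nat) (pc : PC) : bool :=
  match pc with
  | EDL3 k _ _ | VCW0 k _ | VCW1 k _ _ | VSR k _ => k == j
  | ERD _ _ _ _ todo => j \in todo
  | _ => false
  end.

Definition swaps_deps (b : nat) (pc : PC) : bool :=
  match pc with ESW k _ _ => k == b | _ => false end.

Definition dep_lock_held (pc : PC) : option nat :=
  match pc with
  | EDL1 _ _ b | EDLretry _ _ b | EDL2 _ _ b | EDL3 _ _ b | EDL4 _ _ b => Some b
  | _ => None
  end.

Definition registering_dep (pc : PC) : option nat :=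
  match pc with EDL2 _ _ b | EDL3 _ _ b => Some b | _ => None end.

Lemma registering_dep_held pc b : registering_dep pc = Some b -> dep_lock_held pc = Some b.
Proof. by case: pc. Qed.

Definition blocked_on (pc : PC) : option (nat * nat) :=
  match pc with
  | EDL0 k _ b | EDL1 k _ b | EDLretry k _ b | EDL2 k _ b | EDL3 k _ b | EDL4 k _ b =>
      Some (b, k)
  | _ => None
  end.

Definition resume_wf (pc : PC) : bool :=
  match pc with ERD _ _ _ D todo => all (mem D) todo | _ => true end.

Lemma resume_wf_sub k i w D todo y :
  resume_wf (ERD k i w D todo) -> y \in todo -> y \in D.
Proof. by move=> /allP; apply. Qed.

(* Threads that have lowered an index but not yet incremented decrease_cnt. *)
Definition exec_decrease_pending (pc : PC) : bool :=
  if pc is EDC _ _ _ then true else false.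
Definition val_decrease_pending (pc : PC) : bool :=
  match pc with EDVC _ _ | VDVC _ _ => true | _ => false end.

Definition check_done_wf (sh : SH) (f : nat -> PC) (pc : PC) : Prop :=
  match pc with
  | CD1 c => c <= decrease_cnt sh
  | CD2 c => c <= decrease_cnt sh /\
      (decrease_cnt sh = c ->
         n <= execution_idx sh \/ some_thread f exec_decrease_pending)
  | CD3 c => c <= decrease_cnt sh /\
      (decrease_cnt sh = c ->
         (n <= execution_idx sh \/ some_thread f exec_decrease_pending) /\
         (n <= validation_idx sh \/ some_thread f val_decrease_pending))
  | CD4 c => c <= decrease_cnt sh /\ (decrease_cnt sh = c -> settled sh f)
  | CD5 => settled sh f
  | _ => True
  end.

Record inv (sh : SH) (f : nat -> PC) : Prop := Inv {
  inv_active : num_active_tasks sh = Posz (num_holding f);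
  inv_lock_set : forall u b, u < m -> dep_lock_held (f u) = Some b -> dep_lock sh b;
  inv_lock_excl : forall u v b, u < m -> v < m -> dep_lock_held (f u) = Some b ->
    dep_lock_held (f v) = Some b -> u = v;
  inv_registering : forall u b, u < m -> registering_dep (f u) = Some b ->
    ~~ is_executed (txn_status sh b).2 \/ some_thread f (swaps_deps b);
  inv_blocked_lt : forall u b k, u < m -> blocked_on (f u) = Some (b, k) -> b < k;
  inv_resume_wf : forall u, u < m -> resume_wf (f u);
  inv_ready : forall j, j < n -> is_ready (txn_status sh j).2 ->
    execution_idx sh <= j \/ some_thread f (incarnates_pending j);
  inv_aborting : forall j, j < n -> (txn_status sh j).2 = ABORTING ->
    some_thread f (resets_pending j) \/
    exists b, [/\ j \in txn_dependency sh b, b < j &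
      ~~ is_executed (txn_status sh b).2 \/ some_thread f (swaps_deps b)];
  inv_executing : forall j, j < n -> (txn_status sh j).2 = EXECUTING ->
    some_thread f (executes_pending j);
  inv_check_done : forall u, u < m -> check_done_wf sh f (f u);
  inv_done : done_marker sh -> settled sh f
}.

Lemma inv_init : inv (init_shared Loc Val) (fun _ => PLoop None).
Proof.
split => //=.
- by rewrite /num_holding big1.
- by move=> j jn _; left.
Qed.

Lemma idle_settled sh f : inv sh f -> num_holding f = 0 ->
  n <= execution_idx sh -> n <= validation_idx sh -> settled sh f.
Proof.
move=> I f0 ne nv; split => //; last first.
  by move=> u um; apply: idle_outside_intervals; apply: num_holding0.
elim/ltn_ind => j IH jn.
case Hs: (txn_status sh j).2 => //.
- have := inv_ready I jn; rewrite Hs => /(_ erefl) [?|Hx]; first lia.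
  by case: (idle_no_thread f0 Hx); case => //= -[[]|].
- by case: (idle_no_thread f0 (inv_executing I jn Hs)); case => //= -[[]|].
- have [Hx|[b [_ bj [bnexec|Hx]]]] := inv_aborting I jn Hs.
  + by case: (idle_no_thread f0 Hx); case => //= -[[]|].
  + by rewrite IH in bnexec => //; lia.
  + by case: (idle_no_thread f0 Hx); case.
Qed.

Lemma find_below_lt (d : Loc -> nat -> option (Entry Val)) p j k e :
  find_below d p j = Some (k, e) -> k < j.
Proof.
elim: j => //= j IH; case: (d p j) => [e'|]; first by case=> <-.
by move/IH; lia.
Qed.

Lemma mvread_err_lt (d : Loc -> nat -> option (Entry Val)) p j b :
  mvread d p j = RErr Val b -> b < j.
Proof.
rewrite /mvread; case E: (find_below d p j) => [[k [? ?|]]|] //= [<-].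
exact: find_below_lt E.
Qed.

Lemma done_loop_no_task sh f t o :
  inv sh f -> t < m -> f t = PLoop o -> done_marker sh -> o = None.
Proof.
move=> I tm E /(inv_done I) [_ _ _ /(_ t tm)]; rewrite E.
by case: o {E} => [[k i|k i]|] //= [].
Qed.

Ltac destruct_hyps :=
  repeat match goal with
  | H : _ /\ _ |- _ => destruct H
  | H : exists _, _ |- _ => destruct H
  | H : False |- _ => destruct H
  | H : context [if ?b then _ else _] |- _ =>
      let E := fresh "E" in destruct b eqn:E; simpl in H
  | H : context [match ?x with _ => _ end] |- _ =>
      let E := fresh "E" in destruct x eqn:E; simpl in H
  end; subst.

(* One goal per control point of thread t and per branch of its step; a
   thread that reads done_marker = true holds no task, by [inv_done]. *)
Ltac step_cases f t I tm E st :=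
  let st0 := fresh "st" in
  have st0 := st; rewrite /tstep in st0; destruct (f t) eqn:E; simpl in st0; destruct_hyps;
  try match goal with
      | H : done_marker _ = true |- _ =>
          have ? := done_loop_no_task I tm E H; subst
      end.

Ltac upd_cases u t :=
  let Hu := fresh "Hu" in
  case: (u =P t) => Hu; [rewrite Hu upd_same | rewrite upd_other //]; last first.

Section Step.
Variables (sh : SH) (f : nat -> PC) (t : nat) (sh' : SH) (pc' : PC).
Hypotheses (I : inv sh f) (tm : t < m) (st : step sh (f t) sh' pc').

Lemma settled_step : settled sh f -> settled sh' (upd f t pc').
Proof.
case=> ce cv cexec cthr.
step_cases f t I tm E st; have [et vt pt] := cthr t tm; rewrite E /= in et vt pt.
all: try discriminate.
all: split => //=; try lia.
all: try (move=> u um; upd_cases u t; [exact: cthr u um|]; simpl).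
all: try by split=> // x [<-].
all: try by split=> // x [<-]; apply: pt.
all: move: E0 => /andP[kn kready]; try (have := pt _ erefl; lia).
all: by have := cexec _ kn; case: (txn_status sh n0).2 kready.
Qed.

Lemma active_step : num_active_tasks sh' = Posz (num_holding (upd f t pc')).
Proof.
have C := num_holding_upd f pc' tm; have N := inv_active I.
step_cases f t I tm E st; simpl in C; simpl; rewrite ?N; lia.
Qed.

Lemma lock_set_step u b : u < m ->
  dep_lock_held (upd f t pc' u) = Some b -> dep_lock sh' b.
Proof.
step_cases f t I tm E st; move=> um; upd_cases u t.
all: try (move=> Hh; have := inv_lock_set I um Hh; simpl; try done;
  rewrite /upd; case: eqP => //= ?; subst;
  by have := inv_lock_excl I um tm Hh; rewrite E => /(_ erefl)).
all: simpl; try done.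
all: try by case=> <-; rewrite /upd eqxx.
all: by case=> <-; apply: (inv_lock_set I tm); rewrite E.
Qed.

Lemma lock_excl_step u v b : u < m -> v < m ->
  dep_lock_held (upd f t pc' u) = Some b ->
  dep_lock_held (upd f t pc' v) = Some b -> u = v.
Proof.
step_cases f t I tm E st; move=> um vm; rewrite /upd;
  case: (u =P t) => [Hu|Hu]; case: (v =P t) => [Hv|Hv]; try congruence.
all: try exact: (inv_lock_excl I um vm).
all: simpl; try done.
all: try by move=> [<-] Hh; have := inv_lock_excl I tm vm; rewrite E => /(_ _ erefl Hh); congruence.
all: try by move=> Hh [<-]; have := inv_lock_excl I um tm Hh; rewrite E => /(_ erefl); congruence.
all: try by move=> [<-] Hh; have := inv_lock_set I vm Hh; congruence.
all: try by move=> Hh [?]; subst; have := inv_lock_set I um Hh; congruence.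
all: by move=> Hh [?]; subst; have := inv_lock_excl I um tm Hh; rewrite E => /(_ erefl); congruence.
Qed.

Lemma registering_step u b : u < m -> registering_dep (upd f t pc' u) = Some b ->
  ~~ is_executed (txn_status sh' b).2 \/ some_thread (upd f t pc') (swaps_deps b).
Proof.
step_cases f t I tm E st; move=> um; upd_cases u t.
all: try (move=> Hh; have [Hs|Hx] := inv_registering I um Hh; [
   simpl; try (case: eqP => [?|?]; subst);
   try by [left | right; apply: some_thread_new]
 | right; apply: some_thread_keep Hx _; rewrite E //=]).
all: try by simpl; case.
(* the thread holding the lock of b prevents the swap of txn_dependency[b] *)
all: try by apply/eqP => ?; subst; have := inv_lock_set I um (registering_dep_held Hh);
  congruence.
all: try (move=> /= [<-]; have := inv_registering I tm; rewrite E => /(_ _ erefl) [Hs|Hx]).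
all: try (rewrite ?[upd (txn_status _) _ _ _]/upd; case: eqP => [?|?]; subst; try by left).
all: try by right; apply: some_thread_new => //=.
all: try by left; rewrite ?E0.
all: try by right; apply: some_thread_keep Hx _; rewrite E.
all: by move=> /= [<-]; left; rewrite E0.
Qed.

Lemma blocked_lt_step u b k : u < m -> blocked_on (upd f t pc' u) = Some (b, k) -> b < k.
Proof.
step_cases f t I tm E st; move=> um; upd_cases u t.
all: try exact: (inv_blocked_lt I um).
all: simpl; try by [].
all: try by case=> <- <-; apply: (inv_blocked_lt I tm); rewrite E.
all: by case=> <- <-; apply: mvread_err_lt; eassumption.
Qed.

Lemma resume_wf_step u : u < m -> resume_wf (upd f t pc' u).
Proof.
step_cases f t I tm E st; move=> um; upd_cases u t.
all: try exact: (inv_resume_wf I um).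
all: simpl; try by [].
all: try by apply/allP.
all: have := inv_resume_wf I tm; rewrite E /= => /andP[inD todoD]; rewrite ?inD /=.
all: by apply/allP=> y; rewrite mem_filter => /andP[_ /(allP todoD)].
Qed.

Lemma ready_step j : j < n -> is_ready (txn_status sh' j).2 ->
  execution_idx sh' <= j \/ some_thread (upd f t pc') (incarnates_pending j).
Proof.
have Hwf := inv_resume_wf I tm.
step_cases f t I tm E st; move=> jn; simpl.
all: try (rewrite [upd (txn_status _) _ _ _]/upd; case: eqP => [?|?];
  [subst => //=; try by move=> _; right; apply: some_thread_new => //=;
   rewrite ?eqxx ?(resume_wf_sub Hwf H) |]).
all: move=> Hs; have [He|Hx] := inv_ready I jn Hs.
all: try by left; lia.
all: try by right; apply: some_thread_keep Hx _; rewrite E.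
all: try by have [->|ne] := eqVneq n0 j; right;
  [apply: some_thread_new => //=; rewrite eqxx | apply: some_thread_keep Hx _; rewrite E /= ne].
all: try by right; apply: some_thread_keep Hx _; rewrite E /=; apply/eqP => ?; subst; congruence.
(* fetch-and-increment of execution_idx = j: the thread now incarnates j *)
all: try by move: He; rewrite leq_eqVlt => /orP[/eqP ->|lt];
  [right; apply: some_thread_new => //=; rewrite eqxx | left].
all: try by have [?|ne] := eqVneq n0 j;
  [subst; move: E0; rewrite jn Hs | right; apply: some_thread_keep Hx _; rewrite E /= ne].
all: try by have [jD|jD] := boolP (j \in n2 :: l1); right;
  [apply: some_thread_new => //=; apply: foldr_minn_le | apply: some_thread_keep Hx _; rewrite E].
all: try by have [jD|jD] := boolP (j \in l); right;
  [apply: some_thread_new | apply: some_thread_keep Hx _; rewrite E].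
all: try by have [le|gt] := leqP n2 j;
  [left; lia | right; apply: some_thread_keep Hx _; rewrite E /= -ltnNge].
all: by have [?|ne] := eqVneq n0 j;
  [subst; left; lia | right; apply: some_thread_keep Hx _; rewrite E /= ne].
Qed.

Lemma aborting_step j : j < n -> (txn_status sh' j).2 = ABORTING ->
  some_thread (upd f t pc') (resets_pending j) \/
  exists b, [/\ j \in txn_dependency sh' b, b < j &
    ~~ is_executed (txn_status sh' b).2 \/ some_thread (upd f t pc') (swaps_deps b)].
Proof.
have Hreg := inv_registering I tm; have Hblk := inv_blocked_lt I tm.
step_cases f t I tm E st; move=> jn; simpl.
all: try (rewrite [upd (txn_status _) _ _ _]/upd; case: eqP => [?|?];
  [subst => //=; try by move=> _; left; apply: some_thread_new => //=; rewrite eqxx |]).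
all: move=> Hs; have [Hx|[b0 [Hd Hb Hz]]] := inv_aborting I jn Hs.
all: try by left; apply: some_thread_keep Hx _; rewrite E.
all: try by have [?|ne] := eqVneq n0 j; left;
  [subst; apply: some_thread_new => //=; rewrite eqxx | apply: some_thread_keep Hx _; rewrite E /= ne].
all: try by left; apply: some_thread_keep Hx _; rewrite E /=; apply/eqP => ?; subst; congruence.
all: try (match goal with H : _ = ESW _ _ _ |- _ =>
   have [?|ne] := eqVneq b0 n0; [subst; left; apply: some_thread_new => //= | ] end).
all: try (right; exists b0; split; [ try exact: Hd | exact: Hb | ]).
all: try by rewrite /upd; case: eqP => [?|?]; subst => //;
  rewrite ?mem_rcons ?inE ?Hd ?orbT ?eqxx in ne *.
all: try by rewrite /upd; case: eqP => [?|?]; subst => //; rewrite ?mem_rcons ?inE ?Hd ?orbT.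
all: try (case: Hz => [Hn|Hw];
  [ try by left | try by right; apply: some_thread_keep Hw _; rewrite E]).
all: try by right; apply: some_thread_keep Hw _; rewrite E /= eq_sym.
all: try by rewrite [upd (txn_status _) _ _ _]/upd; case: eqP => [?|?]; subst; left.
all: try by rewrite [upd (txn_status _) _ _ _]/upd; case: eqP => [?|?]; subst;
  [right; apply: some_thread_new => //=; rewrite eqxx | left].
(* tx_j registers itself as a dependent of its blocking transaction n2 < j *)
all: try by have [?|ne] := eqVneq n0 j; [subst; right; exists n2; split;
  [rewrite /upd eqxx ?mem_rcons ?inE ?eqxx //| exact: (Hblk _ _ erefl)|
   have [Hn|Hw] := Hreg _ erefl; [left | right; apply: some_thread_keep Hw _; rewrite E]]
  | left; apply: some_thread_keep Hx _; rewrite E /= ne].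
all: by have [jt|jt] := boolP (j \in n2 :: l1); left;
  [apply: some_thread_new => //=; rewrite !inE ?mem_filter /= in jt *; lia
  | apply: some_thread_keep Hx _; rewrite E].
Qed.

Lemma executing_step j : j < n -> (txn_status sh' j).2 = EXECUTING ->
  some_thread (upd f t pc') (executes_pending j).
Proof.
step_cases f t I tm E st; move=> jn; simpl.
all: try (rewrite [upd (txn_status _) _ _ _]/upd; case: eqP => [?|?];
  [subst => //=; try by move=> _; apply: some_thread_new => //=; rewrite eqxx |]).
all: move=> Hs; have Hx := inv_executing I jn Hs.
all: try by apply: some_thread_keep Hx _; rewrite E.
all: try by have [->|ne] := eqVneq n0 j;
  [apply: some_thread_new => //=; rewrite eqxx | apply: some_thread_keep Hx _; rewrite E /= ne].
all: by apply: some_thread_keep Hx _; rewrite E /=; apply/eqP => ?; subst; congruence.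
Qed.

Lemma decrease_cnt_step : decrease_cnt sh <= decrease_cnt sh'.
Proof. by step_cases f t I tm E st. Qed.

Lemma exec_idx_step : decrease_cnt sh' = decrease_cnt sh ->
  n <= execution_idx sh \/ some_thread f exec_decrease_pending ->
  n <= execution_idx sh' \/ some_thread (upd f t pc') exec_decrease_pending.
Proof.
step_cases f t I tm E st; simpl; move=> Hd [Hn|Hx]; try lia.
all: try by right; apply: some_thread_new.
all: try by left; lia.
all: by right; apply: some_thread_keep Hx _; rewrite E.
Qed.

Lemma val_idx_step : decrease_cnt sh' = decrease_cnt sh ->
  n <= validation_idx sh \/ some_thread f val_decrease_pending ->
  n <= validation_idx sh' \/ some_thread (upd f t pc') val_decrease_pending.
Proof.
step_cases f t I tm E st; simpl; move=> Hd [Hn|Hx]; try lia.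
all: try by right; apply: some_thread_new.
all: try by left; lia.
all: by right; apply: some_thread_keep Hx _; rewrite E.
Qed.

Lemma check_done_other_step u : u < m -> u <> t ->
  check_done_wf sh' (upd f t pc') (f u).
Proof.
move=> um ut; have := inv_check_done I um; have dm := decrease_cnt_step.
case: (f u) => //=.
- by move=> c; lia.
- move=> c [c1 c2]; split; first lia.
  by move=> Hd; apply: exec_idx_step; [lia | apply: c2; lia].
- move=> c [c1 c2]; split; first lia.
  move=> Hd; have [h1 h2] := c2 ltac:(lia).
  by split; [apply: exec_idx_step | apply: val_idx_step]; by [lia|].
- move=> c [c1 c2]; split; first lia.
  by move=> Hd; apply: settled_step; apply: c2; lia.
- exact: settled_step.
Qed.

Lemma check_done_self_step : check_done_wf sh' (upd f t pc') pc'.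
Proof.
have Hc := inv_check_done I tm; have settled' := settled_step.
have idle : num_active_tasks sh == 0 -> num_holding f = 0.
  by rewrite (inv_active I) => /eqP [].
step_cases f t I tm E st; simpl; try done; simpl in Hc.
- by split => // _; left.
- case: Hc => c1 c2; split => // Hd; split; last by left.
  by case: (c2 Hd) => [a|b]; [left | right; apply: some_thread_keep b _; rewrite E].
(* num_active_tasks = 0 was read: no index decrease can be pending *)
- case: Hc => c1 c2; split => // Hd; apply: settled'.
  have f0 := idle E0; case: (c2 Hd) => [[a|a] [b|b]].
  + exact: idle_settled.
  + by case: (idle_no_thread f0 b); case.
  + by case: (idle_no_thread f0 a); case.
  + by case: (idle_no_thread f0 a); case.
- by apply: settled'; case: Hc => _; apply; apply/eqP.
Qed.

Lemma done_step : done_marker sh' -> settled sh' (upd f t pc').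
Proof.
have Hc := inv_check_done I tm; have settled' := settled_step.
step_cases f t I tm E st; simpl; move=> Hd; apply: settled'.
all: try exact: (inv_done I Hd).
all: exact: Hc.
Qed.

Lemma inv_step : inv sh' (upd f t pc').
Proof.
split.
- exact: active_step.
- exact: lock_set_step.
- exact: lock_excl_step.
- exact: registering_step.
- exact: blocked_lt_step.
- exact: resume_wf_step.
- exact: ready_step.
- exact: aborting_step.
- exact: executing_step.
- move=> u um; have [->|/eqP ut] := eqVneq u t.
    by rewrite upd_same; apply: check_done_self_step.
  by rewrite upd_other //; apply: check_done_other_step.
- exact: done_step.
Qed.

End Step.

Lemma reachable_inv s : reachable n txs init m s -> inv (gsh s) (gpc s).
Proof.
elim => [|s0 t sh' pc' _ IH tm st] /=; first exact: inv_init.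
exact: inv_step IH tm st.
Qed.

Lemma join_step sh pc sh' : step sh pc sh' PJoined -> done_marker sh.
Proof.
by rewrite /tstep => st; destruct pc; simpl in st; destruct_hyps; try discriminate.
Qed.

Lemma settled_committed (sh : SH) f k : settled sh f -> k < n ->
  globally_committed n m (mkG sh f) k.
Proof.
case=> ce cv cexec cthr kn x [/= ->|[[/= xn]|[u [um Hu]]]]; first lia.
  by rewrite cexec.
have [noexec noval preval] := cthr u um.
case: Hu => [/preval|[[i]|[i]]] /=; [lia | by rewrite noexec | by rewrite noval].
Qed.

End BlockSTM.

Unset Implicit Arguments.

Theorem mainTheorem3 (Loc : eqType) (Val : Type) (n : nat)
  (txs : nat -> Prog Loc Val) (init : Loc -> Val) (m : nat)
  (s : GState Loc Val) (t : nat) (sh' : Shared Loc Val) :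
  reachable n txs init m s -> (t < m)%N ->
  (* thread t joins: its atomic step returns from run *)
  tstep n txs init (gsh s) (gpc s t) sh' PJoined ->
  forall k, (k < n)%N ->
    globally_committed n m (mkG sh' (upd (gpc s) t PJoined)) k.
Proof.
move=> reach tm st k kn.
have I := reachable_inv reach.
apply: settled_committed kn.
exact: settled_step I tm st (inv_done I (join_step st)).
Qed.
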